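(* Let $m\ge 2$, $\Delta_{m-1}=\{\alpha\in\mathbb{R}^m:\alpha_i\ge 0,\ \sum_i\alpha_i=1\}$, and for each $\alpha\in\Delta_{m-1}$ let $\mathcal{J}_\alpha(x,y)$ be a loss differentiable in the input $x\in\mathbb{R}^d$ with gradient $g_\alpha(x,y)=\nabla_x\mathcal{J}_\alpha(x,y)$; for $i=1,\dots,m$ let $g_i(x,y)\in\mathbb{R}^d$ be the input gradient of the single-tool model $i$. Let $\rho_g=\max\{0,\sup_{i\neq j}\sup_{(x,y)}\cos(g_i(x,y),g_j(x,y))\}$. Assume: (i) (local smoothness) there is $\beta>0$ such that for all $\alpha$, $(x,y)$ and all $\delta\in\mathbb{R}^d$, $\mathcal{J}_\alpha(x+\delta,y)\le\mathcal{J}_\alpha(x,y)+\langle g_\alpha(x,y),\delta\rangle+\frac{\beta}{2}\|\delta\|_2^2$; (ii) (bounded gradients) there is $G>0$ with $\|g_i(x,y)\|_2\le G$ for all $i$, $(x,y)$; (iii) (linear aggregation) $g_\alpha=\sum_i\alpha_ig_i+\xi_\alpha$ with $\|\xi_\alpha(x,y)\|_2\le\delta_g$ for all $\alpha$, $(x,y)$; and assume the tool gradients are not perfectly aligned, $\rho_g<1$. Let $\varepsilon>0$ and define the robustness radius $R_\varepsilon(x,y;\alpha)=\sup\{z\ge 0:\forall\delta,\ \|\delta\|_2\le z\Rightarrow \mathcal{J}_\alpha(x+\delta,y)\le\mathcal{J}_\alpha(x,y)+\varepsilon\}$. Let $B(\alpha)=G\sqrt{\rho_g+(1-\rho_g)\|\alpha\|_2^2}+\delta_g$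 (an upper bound on $\|g_\alpha(x,y)\|_2$) and $r(\alpha)=\big(\sqrt{B(\alpha)^2+2\beta\varepsilon}-B(\alpha)\big)/\beta$. Then: $B(\alpha)$ is strictly increasing in $\|\alpha\|_2^2$, so a softer composition (smaller $\|\alpha\|_2^2$) strictly decreases the upper bound on $\|g_\alpha(x,y)\|_2$; and $r(\alpha)$ is a lower bound on $R_\varepsilon(x,y;\alpha)$ for all $(x,y)$, with $r(\alpha)>r(e_j)$ for every non-one-hot $\alpha\in\Delta_{m-1}$ (i.e. $\|\alpha\|_2^2<1$) and every hard selection $e_j$ (a standard basis vector, $\|e_j\|_2^2=1$).
   Context: Setting: a base LLM with parameters $\theta$ and $m$ tools, tool $i$ represented by a parameter increment $\Delta\theta_i$; $\mathcal{J}_\alpha$ is the loss of the model with parameters $\theta+\sum_i\alpha_i\Delta\theta_i$ on input context $x$ and target action $y$, and $g_i$ the input gradient of the loss with parameters $\theta+\Delta\theta_i$. A ''hard selection'' is a one-hot weight vector; a ''soft composition'' is any other weight vector in the simplex. *)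

From HB Require Import structures.
From mathcomp Require Import all_boot all_order all_algebra.
From mathcomp Require Import all_classical all_reals all_analysis.
Set Implicit Arguments. Unset Strict Implicit. Unset Printing Implicit Defensive.
Import Order.TTheory GRing.Theory Num.Theory.
Import numFieldNormedType.Exports.
Local Open Scope classical_set_scope.
Local Open Scope ring_scope.

Section Defs.
Variable R : realType.

Definition dotv (n : nat) (u v : 'rV[R]_n) : R := \sum_(i < n) u 0 i * v 0 i.
Definition norm2 (n : nat) (u : 'rV[R]_n) : R := Num.sqrt (dotv u u).

(* cosine similarity; convention: 0 if one of the vectors is 0 *)
Definition cosv (n : nat) (u v : 'rV[R]_n) : R := dotv u v / (norm2 u * norm2 v).

Definition simplex (m : nat) : set 'rV[R]_m :=
  [set a | (forall i, 0 <= a 0 i) /\ \sum_(i < m) a 0 i = 1].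

Definition basisv (m : nat) (j : 'I_m) : 'rV[R]_m := \row_(i < m) (i == j)%:R.

Definition rho_g (m d : nat) (Y : Type) (gi : 'I_m -> 'rV[R]_d -> Y -> 'rV[R]_d) : R :=
  Num.max 0 (sup [set c | exists (i j : 'I_m) x y, i != j /\ c = cosv (gi i x y) (gi j x y)]).

(* robustness radius R_eps(x,y;alpha), valued in extended reals (may be +oo) *)
Definition robust_radius (m d : nat) (Y : Type) (J : 'rV[R]_m -> 'rV[R]_d -> Y -> R)
  (eps : R) (x : 'rV[R]_d) (y : Y) (a : 'rV[R]_m) : \bar R :=
  ereal_sup [set z%:E | z in [set z : R | 0 <= z /\
     forall delta : 'rV[R]_d, norm2 delta <= z -> J a (x + delta) y <= J a x y + eps]].

Definition Bbound (m : nat) (G rho dg : R) (a : 'rV[R]_m) : R :=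
  G * Num.sqrt (rho + (1 - rho) * norm2 a ^+ 2) + dg.

Definition rlow (m : nat) (G rho dg beta eps : R) (a : 'rV[R]_m) : R :=
  (Num.sqrt (Bbound G rho dg a ^+ 2 + 2 * beta * eps) - Bbound G rho dg a) / beta.

End Defs.

From HB Require Import structures.
From mathcomp Require Import all_boot all_order all_algebra.
From mathcomp Require Import all_classical all_reals all_analysis.
From mathcomp Require Import ring lra.
Import Order.TTheory GRing.Theory Num.Theory.
Import numFieldNormedType.Exports.
Local Open Scope classical_set_scope.
Local Open Scope ring_scope.

(* On the simplex, expanding |sum_i a_i g_i|^2 = sum_(i,j) a_i a_j <g_i, g_j> and bounding
   the off-diagonal terms by rho G^2 and the diagonal ones by G^2 gives
   G^2 (rho + (1 - rho) |a|^2); with the triangle inequality this yields |g_a| <= B(a),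
   which increases with |a|^2 because rho < 1.  By Cauchy-Schwarz and smoothness,
   J_a(x + delta) - J_a(x) <= B |delta| + beta/2 |delta|^2, and r(a) is the nonnegative root
   of B r + beta/2 r^2 = eps.  This root strictly decreases in B, and a hard selection has
   the largest possible |a|^2 = 1. *)

Set Implicit Arguments.
Unset Strict Implicit.
Unset Printing Implicit Defensive.

Section Euclidean.
Variables (R : realType) (n : nat).
Implicit Types (u v w : 'rV[R]_n) (c : R).

Lemma dotvC u v : dotv u v = dotv v u.
Proof. by apply: eq_bigr => i _; rewrite mulrC. Qed.

Lemma dotvDl u v w : dotv (u + v) w = dotv u w + dotv v w.
Proof. by rewrite /dotv -big_split; apply: eq_bigr => i _; rewrite mxE mulrDl. Qed.

Lemma dotvZl c u w : dotv (c *: u) w = c * dotv u w.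
Proof. by rewrite /dotv mulr_sumr; apply: eq_bigr => i _; rewrite mxE mulrA. Qed.

Lemma dotvNl u w : dotv (- u) w = - dotv u w.
Proof. by rewrite -scaleN1r dotvZl mulN1r. Qed.

Lemma dotv_suml (I : finType) (F : I -> 'rV[R]_n) w :
  dotv (\sum_i F i) w = \sum_i dotv (F i) w.
Proof.
by rewrite /dotv exchange_big; apply: eq_bigr => k _; rewrite summxE mulr_suml.
Qed.

Lemma dotvv_ge0 u : 0 <= dotv u u.
Proof. by apply: sumr_ge0 => i _; rewrite -expr2 sqr_ge0. Qed.

Lemma norm2_ge0 u : 0 <= norm2 u.
Proof. exact: sqrtr_ge0. Qed.

Lemma norm2_sqr u : norm2 u ^+ 2 = dotv u u.
Proof. by rewrite sqr_sqrtr // dotvv_ge0. Qed.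

Lemma norm2_eq0_dotv u v : norm2 u = 0 -> dotv u v = 0.
Proof.
move=> u0; have : dotv u u = 0 by rewrite -norm2_sqr u0 expr0n.
have uu_ge0 (i : 'I_n) : true -> 0 <= u 0 i * u 0 i by rewrite -expr2 sqr_ge0.
move/(psumr_eq0P uu_ge0) => uu0.
apply: big1 => i _.
by have /eqP := uu0 i isT; rewrite mulf_eq0 orbb => /eqP ->; rewrite mul0r.
Qed.

Lemma dotv_le_norm2 u v : dotv u v <= norm2 u * norm2 v.
Proof.
have [uv0|uv_gt0] := eqVneq (norm2 u * norm2 v) 0.
  move: uv0 => /eqP; rewrite mulf_eq0 => /orP[/eqP u0|/eqP v0].
    by rewrite norm2_eq0_dotv // u0 mul0r.
  by rewrite dotvC norm2_eq0_dotv // v0 mulr0.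
have uv_pos : 0 < norm2 u * norm2 v by rewrite lt_def uv_gt0 mulr_ge0 ?norm2_ge0.
(* [| |v| u - |u| v |^2 = 2 |u| |v| (|u| |v| - <u, v>)] *)
have := dotvv_ge0 (norm2 v *: u - norm2 u *: v).
rewrite !(dotvDl, dotvNl, dotvZl) !(dotvC _ (_ - _)) !(dotvDl, dotvNl, dotvZl).
rewrite -!norm2_sqr (dotvC v u); nra.
Qed.

Lemma norm2D_le u v : norm2 (u + v) <= norm2 u + norm2 v.
Proof.
have uv_ge0 : 0 <= norm2 u + norm2 v by rewrite addr_ge0 ?norm2_ge0.
rewrite -(ler_pXn2r (_ : 0 < 2)%N) ?nnegrE ?norm2_ge0 //.
rewrite norm2_sqr !(dotvDl, dotvC _ (u + v)) (dotvC v u) -!norm2_sqr.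
have := dotv_le_norm2 u v; nra.
Qed.

Lemma cosv_le1 u v : cosv u v <= 1.
Proof.
rewrite /cosv; have [uv_pos|uv_le0] := ltP 0 (norm2 u * norm2 v).
  by rewrite ler_pdivrMr // mul1r dotv_le_norm2.
have -> : norm2 u * norm2 v = 0.
  by apply/eqP; rewrite eq_le uv_le0 mulr_ge0 ?norm2_ge0.
by rewrite invr0 mulr0.
Qed.

Lemma dotv_le_cosv_bound u v c : 0 <= c -> cosv u v <= c ->
  dotv u v <= c * (norm2 u * norm2 v).
Proof.
move=> c_ge0 cos_le; have [uv_pos|uv_le0] := ltP 0 (norm2 u * norm2 v).
  by rewrite -ler_pdivrMr // mulrC.
have uv0 : norm2 u * norm2 v = 0.
  by apply/eqP; rewrite eq_le uv_le0 mulr_ge0 ?norm2_ge0.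
by rewrite uv0 mulr0 -uv0 dotv_le_norm2.
Qed.

End Euclidean.

Section MaxCosine.
Variables (R : realType) (m d : nat) (Y : Type).
Variable gi : 'I_m -> 'rV[R]_d -> Y -> 'rV[R]_d.

Lemma rho_g_ge0 : 0 <= rho_g gi.
Proof. by rewrite le_max lexx. Qed.

Lemma cosv_le_rho_g i j x y : i != j -> cosv (gi i x y) (gi j x y) <= rho_g gi.
Proof.
move=> ij; rewrite le_max; apply/orP; right; apply: sup_upper_bound.
  split; first by exists (cosv (gi i x y) (gi j x y)), i, j, x, y.
  by exists 1 => _ [i' [j' [x' [y' [_ ->]]]]]; apply: cosv_le1.
by exists i, j, x, y.
Qed.

End MaxCosine.

Lemma norm2_sum_sqr_le (R : realType) (m n : nat) (a : 'rV[R]_m)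
    (w : 'I_m -> 'rV[R]_n) (G rho : R) :
  (forall i, 0 <= a 0 i) -> \sum_i a 0 i = 1 -> 0 <= rho ->
  (forall i, norm2 (w i) <= G) ->
  (forall i j, i != j -> dotv (w i) (w j) <= rho * (norm2 (w i) * norm2 (w j))) ->
  norm2 (\sum_i a 0 i *: w i) ^+ 2 <= G ^+ 2 * (rho + (1 - rho) * norm2 a ^+ 2).
Proof.
move=> a_ge0 a_sum1 rho_ge0 w_le w_dot.
set K := (1 - rho) * G ^+ 2.
have dot_le i j : dotv (w i) (w j) <= rho * G ^+ 2 + (i == j)%:R * K.
  have wi_le := w_le i; have wi_ge0 := norm2_ge0 (w i).
  have [<-|ij] := eqVneq i j.
    rewrite -norm2_sqr mul1r /K.
    suff : norm2 (w i) ^+ 2 <= G ^+ 2 by lra.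
    by rewrite ler_pXn2r ?nnegrE // (le_trans wi_ge0).
  rewrite mul0r addr0 (le_trans (w_dot i j ij)) // ler_wpM2l // expr2.
  by rewrite ler_pM ?norm2_ge0.
have delta_sum (F : 'I_m -> R) i : \sum_j (i == j)%:R * F j = F i.
  rewrite (bigD1 i) //= eqxx mul1r big1 ?addr0 // => j ji.
  by rewrite eq_sym (negbTE ji) mul0r.
rewrite norm2_sqr dotv_suml.
under eq_bigr => i _ do rewrite dotvZl dotvC dotv_suml mulr_sumr.
apply: (@le_trans _ _ (\sum_i \sum_j a 0 i * (a 0 j * (rho * G ^+ 2 + (i == j)%:R * K)))).
  apply: ler_sum => i _; apply: ler_sum => j _; rewrite dotvZl dotvC mulrA.
  by rewrite [leRHS]mulrA ler_wpM2l ?mulr_ge0.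
have -> : \sum_i \sum_j a 0 i * (a 0 j * (rho * G ^+ 2 + (i == j)%:R * K)) =
    \sum_i (a 0 i * (rho * G ^+ 2) * \sum_j a 0 j + K * (a 0 i * \sum_j (i == j)%:R * a 0 j)).
  by apply: eq_bigr => i _; rewrite !mulr_sumr -big_split; apply: eq_bigr => j _ /=; ring.
under eq_bigr => i _ do rewrite delta_sum a_sum1 mulr1.
rewrite big_split /= -!mulr_suml -mulr_sumr a_sum1 mul1r norm2_sqr /dotv /K.
by rewrite le_eqVlt; apply/orP; left; apply/eqP; ring.
Qed.

Lemma norm2_basisv_sqr (R : realType) (m : nat) (j : 'I_m) :
  norm2 (basisv R j) ^+ 2 = 1.
Proof.
rewrite norm2_sqr /dotv (bigD1 j) //= !mxE eqxx mulr1 big1 ?addr0 // => i ij.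
by rewrite !mxE (negbTE ij) mulr0.
Qed.

Section SmoothRadius.
Variables (R : realType) (beta eps : R).
Hypotheses (beta_gt0 : 0 < beta) (eps_ge0 : 0 <= eps).

Definition smooth_radius (B : R) : R :=
  (Num.sqrt (B ^+ 2 + 2 * beta * eps) - B) / beta.

Let discr_ge0 B : 0 <= B ^+ 2 + 2 * beta * eps.
Proof. by rewrite addr_ge0 ?sqr_ge0 // mulr_ge0 // mulr_ge0 // ltW. Qed.

Lemma le_sqrt_discr B : B <= Num.sqrt (B ^+ 2 + 2 * beta * eps).
Proof.
have [B_lt0|B_ge0] := ltP B 0; first by rewrite (le_trans (ltW B_lt0)) ?sqrtr_ge0.
rewrite -{1}(ger0_norm B_ge0) -sqrtr_sqr ler_wsqrtr // lerDl.
by rewrite mulr_ge0 // mulr_ge0 // ltW.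
Qed.

Lemma smooth_radius_ge0 B : 0 <= smooth_radius B.
Proof. by rewrite divr_ge0 ?subr_ge0 ?le_sqrt_discr ?ltW. Qed.

Lemma smooth_radius_root B :
  B * smooth_radius B + beta / 2 * smooth_radius B ^+ 2 = eps.
Proof.
have := sqr_sqrtr (discr_ge0 B).
rewrite /smooth_radius; set s := Num.sqrt _; set r := (s - B) / beta => s_sqr.
have beta_r : beta * r = s - B by rewrite mulrC divfK ?gt_eqF.
apply: (@mulfI _ (2 * beta)); first by rewrite mulf_neq0 ?gt_eqF.
have -> : 2 * beta * (B * r + beta / 2 * r ^+ 2) = 2 * B * (beta * r) + (beta * r) ^+ 2.
  by field.
rewrite beta_r (_ : 2 * beta * eps = s ^+ 2 - B ^+ 2); first by ring.
by rewrite s_sqr; ring.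
Qed.

Lemma smooth_radius_lt B1 B2 : 0 < eps -> B1 < B2 -> smooth_radius B2 < smooth_radius B1.
Proof.
move=> eps_gt0 B12; rewrite ltr_pM2r ?invr_gt0 //.
have c_gt0 : 0 < 2 * beta * eps by rewrite !mulr_gt0.
have := sqr_sqrtr (discr_ge0 B1); have := sqrtr_ge0 (B1 ^+ 2 + 2 * beta * eps).
have := sqr_sqrtr (discr_ge0 B2); have := sqrtr_ge0 (B2 ^+ 2 + 2 * beta * eps).
set s1 := Num.sqrt (B1 ^+ 2 + _); set s2 := Num.sqrt (B2 ^+ 2 + _) => s2_ge0 s2_sqr s1_ge0 s1_sqr.
(* [s - B = c / (s + B)], and [s + B > 0] grows with [B] *)
have : B1 < s1 by nra.
have : B2 < s2 by nra.
nra.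
Qed.

Lemma smooth_ball_le (d : nat) (f : 'rV[R]_d -> R) (x gx : 'rV[R]_d) (B : R) :
  (forall delta, f (x + delta) <= f x + dotv gx delta + beta / 2 * norm2 delta ^+ 2) ->
  norm2 gx <= B ->
  forall delta, norm2 delta <= smooth_radius B -> f (x + delta) <= f x + eps.
Proof.
move=> f_smooth gx_le delta delta_le; apply: le_trans (f_smooth delta) _.
have delta_ge0 := norm2_ge0 delta; have gx_ge0 := norm2_ge0 gx.
rewrite -addrA lerD2l -(smooth_radius_root B) lerD //.
  apply: le_trans (dotv_le_norm2 gx delta) _.
  by rewrite ler_pM.
by rewrite ler_pM2l ?divr_gt0 // ler_pXn2r ?nnegrE ?smooth_radius_ge0.
Qed.

End SmoothRadius.

Section GradientBound.
Variables (R : realType) (m : nat) (G rho dg : R).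
Hypotheses (rho_ge0 : 0 <= rho) (rho_le1 : rho <= 1).

Lemma Bbound_lt (a a' : 'rV[R]_m) : 0 < G -> rho < 1 ->
  norm2 a ^+ 2 < norm2 a' ^+ 2 -> Bbound G rho dg a < Bbound G rho dg a'.
Proof.
move=> G_gt0 rho_lt1 aa'; rewrite ltrD2r ltr_pM2l // ltr_sqrt; last first.
  by rewrite ltr_wpDl // mulr_gt0 ?subr_gt0 // (le_lt_trans (sqr_ge0 _) aa').
by rewrite ltrD2l ltr_pM2l ?subr_gt0.
Qed.

Lemma norm2_le_Bbound (d : nat) (a : 'rV[R]_m) (v s : 'rV[R]_d) : 0 <= G ->
  norm2 s ^+ 2 <= G ^+ 2 * (rho + (1 - rho) * norm2 a ^+ 2) ->
  norm2 (v - s) <= dg -> norm2 v <= Bbound G rho dg a.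
Proof.
move=> G_ge0 s_le vs_le; rewrite -(subrK s v) addrC /Bbound.
apply: le_trans (norm2D_le _ _) _; rewrite lerD //.
have t_ge0 : 0 <= rho + (1 - rho) * norm2 a ^+ 2.
  by rewrite addr_ge0 // mulr_ge0 ?subr_ge0 ?sqr_ge0.
rewrite -(ler_pXn2r (_ : 0 < 2)%N) ?nnegrE ?norm2_ge0 ?mulr_ge0 ?sqrtr_ge0 //.
by rewrite exprMn (sqr_sqrtr t_ge0).
Qed.

End GradientBound.

Theorem corollary3p7 (R : realType) (m d : nat) (Y : Type)
  (J : 'rV[R]_m -> 'rV[R]_d -> Y -> R)
  (g : 'rV[R]_m -> 'rV[R]_d -> Y -> 'rV[R]_d)
  (gi : 'I_m -> 'rV[R]_d -> Y -> 'rV[R]_d)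
  (beta G dg eps : R) :
  (2 <= m)%N ->
  (* g_alpha is the input gradient of J_alpha *)
  (forall a x y, a \in @simplex R m ->
     differentiable (fun z => J a z y) x /\
     forall v, is_derive x v (fun z => J a z y) (dotv (g a x y) v)) ->
  (* (i) local smoothness *)
  0 < beta ->
  (forall a x y (delta : 'rV[R]_d), a \in @simplex R m ->
     J a (x + delta) y <= J a x y + dotv (g a x y) delta + beta / 2 * norm2 delta ^+ 2) ->
  (* (ii) bounded gradients *)
  0 < G ->
  (forall i x y, norm2 (gi i x y) <= G) ->
  (* (iii) linear aggregation: g_alpha = sum_i alpha_i g_i + xi_alpha, ||xi_alpha|| <= dg *)
  (forall a x y, a \in @simplex R m ->
     norm2 (g a x y - \sum_(i < m) a 0 i *: gi i x y) <= dg) ->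
  (* tool gradients not perfectly aligned *)
  rho_g gi < 1 ->
  0 < eps ->
  (* B strictly increasing in ||alpha||^2 *)
  (forall a a', a \in @simplex R m -> a' \in @simplex R m ->
     norm2 a ^+ 2 < norm2 a' ^+ 2 ->
     Bbound G (rho_g gi) dg a < Bbound G (rho_g gi) dg a') /\
  (* B bounds the gradient norm *)
  (forall a x y, a \in @simplex R m -> norm2 (g a x y) <= Bbound G (rho_g gi) dg a) /\
  (* r(alpha) lower-bounds the robustness radius *)
  (forall a x y, a \in @simplex R m ->
     ((rlow G (rho_g gi) dg beta eps a)%:E <= robust_radius J eps x y a)%E) /\
  (* soft compositions beat every hard selection *)
  (forall a (j : 'I_m), a \in @simplex R m -> norm2 a ^+ 2 < 1 ->
     rlow G (rho_g gi) dg beta eps (@basisv R m j) < rlow G (rho_g gi) dg beta eps a).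
Proof.
move=> _ _ beta_gt0 J_smooth G_gt0 gi_le g_lin rho_lt1 eps_gt0.
have eps_ge0 := ltW eps_gt0; have rho_ge0 := rho_g_ge0 gi; have rho_le1 := ltW rho_lt1.
have g_le_B a x y : a \in @simplex R m -> norm2 (g a x y) <= Bbound G (rho_g gi) dg a.
  move=> a_simplex; apply: norm2_le_Bbound (g_lin a x y a_simplex) => //; first exact: ltW.
  move: a_simplex; rewrite inE => -[a_ge0 a_sum1].
  apply: norm2_sum_sqr_le => // i j ij.
  by apply: dotv_le_cosv_bound => //; apply: cosv_le_rho_g.
split; first by move=> a a' _ _; apply: Bbound_lt.
split; first exact: g_le_B.
split.
  move=> a x y a_simplex; apply: ereal_sup_ubound.
  exists (rlow G (rho_g gi) dg beta eps a) => //.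
  split; first exact: smooth_radius_ge0.
  apply: (smooth_ball_le (f := J a ^~ y) beta_gt0 eps_ge0 _ (g_le_B a x y a_simplex)).
  by move=> delta; apply: J_smooth.
move=> a j _ a_lt1; apply: smooth_radius_lt => //.
by apply: Bbound_lt; rewrite ?norm2_basisv_sqr.
Qed.
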